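(* Let $r,r'\ge 1$ be integers, let $P:[r]^2\to\{0,1\}$ and $P':[r']^2\to\{0,1\}$ be binary predicates, and let $V$ be a finite set with $n=|V|$. Suppose there is a function $f_P:\mathrm{Part}_r(V)\to\mathrm{Part}_{r'}(V^\gamma)$ such that for every weighted directed graph $G$ on vertex set $V$ and every $\mathcal{A}\in\mathrm{Part}_r(V)$, $$\mathrm{Val}_{G,P}(\mathcal{A})=\mathrm{Val}_{\gamma(G),P'}(f_P(\mathcal{A})),$$ where $\gamma(G)$ is the bipartite double cover of $G$. Let $G$ be a weighted directed graph on $V$ and $0<\varepsilon<1$. If there is an $\varepsilon$-$P'$-sparsifier of $\gamma(G)$ with $g(n)$ edges, then there is an $\varepsilon$-$P$-sparsifier of $G$ with $g(n)$ edges.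
   Context: $[r]=\{0,1,\dots,r-1\}$. A weighted directed graph $G=(V,E,w)$ has $E$ a set of ordered pairs of distinct vertices and $w:E\to\mathbb{R}_{>0}$. Its bipartite double cover is $\gamma(G)=(V^\gamma,E^\gamma,w^\gamma)$ with $V^\gamma=\{v^{(0)},v^{(1)}:v\in V\}$ (two copies of each vertex), $E^\gamma=\{(u^{(0)},v^{(1)}):(u,v)\in E\}$, $w^\gamma(u^{(0)},v^{(1)})=w(u,v)$; note $V^\gamma$ depends only on $V$. $\mathrm{Part}_r(X)$ is the set of ordered $r$-tuples $(A_0,\dots,A_{r-1})$ of pairwise disjoint, possibly empty, subsets of $X$ with union $X$; these correspond bijectively to assignments $A:X\to[r]$ via $A_j=A^{-1}(j)$. For a predicate $Q:[s]^2\to\{0,1\}$, a weighted directed graph $G=(X,E,w)$ and $\mathcal{A}\in\mathrm{Part}_s(X)$ with corresponding assignment $A$, $\mathrm{Val}_{G,Q}(\mathcal{A})=\sum_{(u,v)\in E}w(u,v)Q(A(u),A(v))$. An $\varepsilon$-$Q$-sparsifier of $G=(X,E,w)$ is a graph $G_\varepsilon=(X,E_\varepsilon,w_\varepsilon)$ with $E_\varepsilon\subseteq E$, $w_\varepsilon:E_\varepsilon\to\mathbb{R}_{>0}$, such that for all $\mathcal{A}\in\mathrm{Part}_s(X)$, $(1-\varepsilon)\mathrm{Val}_{G,Q}(\mathcal{A})\le\mathrm{Val}_{G_\varepsilon,Q}(\mathcal{A})\le(1+\varepsilon)\mathrm{Val}_{G,Q}(\mathcal{A})$; its number of edges is $|E_\varepsilon|$.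 *)

From HB Require Import structures.
From mathcomp Require Import all_boot all_order all_algebra.
Set Implicit Arguments. Unset Strict Implicit. Unset Printing Implicit Defensive.
Import Order.TTheory GRing.Theory Num.Theory.
Local Open Scope ring_scope.

(* A weighted directed graph on the finite vertex type X: an edge set of
   ordered pairs and a weight function (only its values on edges matter). *)
Record wdigraph (R : realFieldType) (X : finType) := WDigraph {
  edges : {set X * X};
  weight : X * X -> R }.

Definition is_wdigraph (R : realFieldType) (X : finType) (G : wdigraph R X) : Prop :=
  (forall e, e \in edges G -> e.1 != e.2) /\
  (forall e, e \in edges G -> 0 < weight G e).

(* Assignments A : X -> [s] (equivalently ordered s-partitions of X). *)
Definition Val (R : realFieldType) (X : finType) (s : nat) (G : wdigraph R X)
    (Q : 'I_s -> 'I_s -> bool) (A : {ffun X -> 'I_s}) : R :=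
  \sum_(e in edges G) weight G e * (Q (A e.1) (A e.2))%:R.

(* Bipartite double cover: v^(0) = (v,false), v^(1) = (v,true). *)
Definition gamma (R : realFieldType) (V : finType) (G : wdigraph R V)
    : wdigraph R (V * bool)%type :=
  WDigraph [set ((e.1, false), (e.2, true)) | e in edges G]
           (fun x => weight G (x.1.1, x.2.1)).

Definition is_sparsifier (R : realFieldType) (X : finType) (s : nat)
    (Q : 'I_s -> 'I_s -> bool) (G H : wdigraph R X) (eps : R) : Prop :=
  edges H \subset edges G /\
  (forall e, e \in edges H -> 0 < weight H e) /\
  (forall A : {ffun X -> 'I_s},
      (1 - eps) * Val G Q A <= Val H Q A /\ Val H Q A <= (1 + eps) * Val G Q A).

From HB Require Import structures.
From mathcomp Require Import all_boot all_order all_algebra.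
Set Implicit Arguments. Unset Strict Implicit. Unset Printing Implicit Defensive.
Import Order.TTheory GRing.Theory Num.Theory.
Local Open Scope ring_scope.

(* Every edge of gamma G is the lift (u,v) |-> (u^(0), v^(1)) of an edge of G,
   and this lift is injective.  Hence a sparsifier H' of gamma G is the double
   cover of the graph H on V whose edges are the lifts it contains: gamma H and
   H' have the same edges and weights, so their P'-values agree, and through
   f_P the P'-inequalities for H' become the P-inequalities for H. *)

Definition cover_edge (V : finType) (e : V * V) : (V * bool) * (V * bool) :=
  ((e.1, false), (e.2, true)).

Lemma cover_edge_inj (V : finType) : injective (@cover_edge V).
Proof. by move=> [a b] [c d] [-> ->]. Qed.

Section Val.

Variables (R : realFieldType) (X : finType) (s : nat) (Q : 'I_s -> 'I_s -> bool).

Lemma eq_Val (G H : wdigraph R X) (A : {ffun X -> 'I_s}) :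
  edges G = edges H -> {in edges G, weight G =1 weight H} ->
  Val G Q A = Val H Q A.
Proof. by move=> eGH wGH; rewrite /Val -eGH; apply: eq_bigr => e /wGH ->. Qed.

End Val.

Section Uncover.

Variables (R : realFieldType) (V : finType).

Definition uncover (H : wdigraph R (V * bool)%type) : wdigraph R V :=
  WDigraph [set e | cover_edge e \in edges H] (weight H \o @cover_edge V).

Variables (G : wdigraph R V) (H : wdigraph R (V * bool)%type).
Hypothesis subH : edges H \subset edges (gamma G).

Lemma edges_gamma_uncover : edges (gamma (uncover H)) = edges H.
Proof.
apply/setP => x; apply/imsetP/idP => [[e] | Hx]; first by rewrite inE => He ->.
have /imsetP[e _ xE] := subsetP subH x Hx.
by exists e; rewrite // inE /cover_edge -xE.
Qed.

Lemma Val_gamma_uncover (r : nat) (Q : 'I_r -> 'I_r -> bool) A :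
  Val (gamma (uncover H)) Q A = Val H Q A.
Proof.
apply: eq_Val; first exact: edges_gamma_uncover.
by move=> x; rewrite edges_gamma_uncover => /(subsetP subH) /imsetP[e _ ->].
Qed.

Lemma card_uncover : #|edges (uncover H)| = #|edges H|.
Proof.
by rewrite -edges_gamma_uncover card_imset //; exact: cover_edge_inj.
Qed.

Lemma uncover_sub : edges (uncover H) \subset edges G.
Proof.
apply/subsetP => e; rewrite inE.
by move=> /(subsetP subH) /imsetP[e' He' /cover_edge_inj ->].
Qed.

Lemma uncover_is_wdigraph :
  is_wdigraph G -> (forall x, x \in edges H -> 0 < weight H x) ->
  is_wdigraph (uncover H).
Proof.
move=> [loopG _] posH; split=> [e /(subsetP uncover_sub) /loopG //|].
by move=> e; rewrite inE => /posH.
Qed.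

End Uncover.

Theorem proposition5 (R : realFieldType) (r r' : nat)
    (P : 'I_r -> 'I_r -> bool) (P' : 'I_r' -> 'I_r' -> bool)
    (V : finType) (g : nat -> nat)
    (fP : {ffun V -> 'I_r} -> {ffun (V * bool)%type -> 'I_r'}) :
  (0 < r)%N -> (0 < r')%N ->
  (forall (G : wdigraph R V) (A : {ffun V -> 'I_r}),
      is_wdigraph G -> Val G P A = Val (gamma G) P' (fP A)) ->
  forall (G : wdigraph R V) (eps : R),
    is_wdigraph G -> 0 < eps < 1 ->
    (exists H : wdigraph R (V * bool)%type,
        is_sparsifier P' (gamma G) H eps /\ #|edges H| = g #|V|) ->
    exists H : wdigraph R V,
      is_sparsifier P G H eps /\ #|edges H| = g #|V|.
Proof.
move=> _ _ fPval G eps wG _ [H [[subH [posH valH]] cardH]].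
exists (uncover H); split; last by rewrite (card_uncover subH) cardH.
split; first exact: uncover_sub subH.
split=> [e|A]; first by rewrite inE => /posH.
have wH := uncover_is_wdigraph subH wG posH.
by rewrite (fPval G A wG) (fPval _ A wH) (Val_gamma_uncover subH).
Qed.
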